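(* Let $\sigma$ be a filling of $\mathrm{dg}(\lambda)$, and let $i,r$ be such that the cells $(i,r),(i+1,r)$ lie in $\mathrm{dg}(\lambda)$, $\sigma(i,r)\ne\sigma(i+1,r)$, and $\sigma(i,s)=\sigma(i+1,s)$ for all $1\le s\le r-1$. Let $T$ be the triple formed by the cells $(i+1,r),(i,r),(i,r-1)$ (where $(i,0)$ is the basement cell with entry $\infty$). Then \[ \mathrm{inv}(\mathcal{T}_i^{(r)}(\sigma))=\begin{cases}\mathrm{inv}(\sigma)-1,& T\text{ counterclockwise in }\sigma,\\ \mathrm{inv}(\sigma)+1,&\text{otherwise.}\end{cases} \]
   Context: Diagrams and fillings: for a partition $\lambda=(\lambda_1\ge\dots\ge\lambda_n>0)$, $\mathrm{dg}(\lambda)$ is the set of cells $(i,r)$ with $1\le i\le n$, $1\le r\le\lambda_i$ (column $i$ from the left has $\lambda_i$ cells; rows counted from the bottom). A filling is a map $\sigma:\mathrm{dg}(\lambda)\to\mathbb{Z}_{>0}$. A basement row $0$ is adjoined with $\sigma(i,0)=\infty$. For $u<v$, $r\ge1$, $(v,r),(u,r)\in\mathrm{dg}(\lambda)$, the cells $(v,r),(u,r),(u,r-1)$ form a triple; with $a=\sigma(v,r),b=\sigma(u,r),c=\sigma(u,r-1)$ it is counterclockwise (an inversion triple) if $a<b\le c$ or $c<a<b$ or $b\le c<a$, and clockwise otherwise. $\mathrm{inv}(\sigma)$ is the number of inversion triples (including those with $r=1$). Operator $\mathcal{T}_i^{(r)}$ (defined when columns $i,i+1$ agree in rows $1,\dots,r-1$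 and differ in row $r$): (1) swap the entries of cells $(i,r)$ and $(i+1,r)$; (2) if the cells $(i+1,r+1),(i,r+1)$ do not both exist, stop; otherwise consider the triple $(i+1,r+1),(i,r+1),(i,r)$: if it was counterclockwise both before and after the last swap, or clockwise both before and after, stop; otherwise swap the entries of $(i,r+1)$ and $(i+1,r+1)$, replace $r$ by $r+1$ and repeat step (2). *)

From mathcomp Require Import all_boot all_order all_algebra.
Set Implicit Arguments. Unset Strict Implicit. Unset Printing Implicit Defensive.

(* A partition is a nonincreasing sequence of positive naturals:
   lam = [:: lambda_1; ...; lambda_n]. Column i (1-indexed) has lambda_i cells. *)
Definition is_partition (lam : seq nat) : bool :=
  sorted geq lam && all (fun x => 0 < x) lam.

Definition colLen (lam : seq nat) (i : nat) : nat := nth 0 lam i.-1.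

Definition in_dg (lam : seq nat) (i r : nat) : bool :=
  (1 <= i <= size lam) && (1 <= r <= colLen lam i).

(* A filling is a map (column, row) |-> entry; only its values on dg(lam)
   matter. *)
Definition filling := nat -> nat -> nat.

Definition is_filling (lam : seq nat) (sigma : filling) : Prop :=
  forall i r, in_dg lam i r -> 0 < sigma i r.

(* Extended positive integers: None represents infinity (basement). *)
Definition xlt (a b : option nat) : bool :=
  match a, b with
  | Some x, Some y => x < y
  | Some _, None => true
  | None, _ => false
  end.
Definition xle (a b : option nat) : bool :=
  match a, b with
  | Some x, Some y => x <= y
  | _, None => true
  | None, Some _ => false
  end.

Definition cellv (sigma : filling) (i r : nat) : option nat :=
  if r == 0 then None else Some (sigma i r).

(* counterclockwise (inversion) triple with a = top-right, b = top-left,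
   c = below b *)
Definition ccw (a b c : option nat) : bool :=
  [|| xlt a b && xle b c, xlt c a && xlt a b | xle b c && xlt c a].

Definition ccw_triple (sigma : filling) (v u r : nat) : bool :=
  ccw (cellv sigma v r) (cellv sigma u r) (cellv sigma u r.-1).

Definition inv_num (lam : seq nat) (sigma : filling) : nat :=
  \sum_(1 <= v < (size lam).+1) \sum_(1 <= u < v)
     \sum_(1 <= r < (colLen lam v).+1)
        (in_dg lam v r && in_dg lam u r && ccw_triple sigma v u r).

Definition swap_cells (sigma : filling) (i r : nat) : filling :=
  fun j s =>
    if s == r then
      (if j == i then sigma i.+1 r else if j == i.+1 then sigma i r else sigma j s)
    else sigma j s.

(* step (2) of the operator, with "prev" the filling before the last swap
   (done in row r) and "cur" the filling after it; fuel bounds the rows. *)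
Fixpoint T_loop (fuel : nat) (lam : seq nat) (i r : nat) (prev cur : filling)
  : filling :=
  match fuel with
  | 0 => cur
  | f.+1 =>
      if in_dg lam i.+1 r.+1 && in_dg lam i r.+1 then
        if ccw_triple prev i.+1 i r.+1 == ccw_triple cur i.+1 i r.+1 then cur
        else T_loop f lam i r.+1 cur (swap_cells cur i r.+1)
      else cur
  end.

(* the operator T_i^{(r)}; the fuel colLen lam i.+1 (= lambda_{i+1}) is never
   exhausted before the procedure stops, since each iteration moves one row up
   and requires row r+1 <= lambda_{i+1} to exist. *)
Definition T_op (lam : seq nat) (i r : nat) (sigma : filling) : filling :=
  T_loop (colLen lam i.+1) lam i r sigma (swap_cells sigma i r).

From mathcomp Require Import all_boot all_order all_algebra.
From mathcomp Require Import zify.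

Set Implicit Arguments. Unset Strict Implicit. Unset Printing Implicit Defensive.

(* The operator T_i^(r) exchanges the entries of columns i and i+1 in a block
   of consecutive rows r..m: after the swap in row s-1 it goes on to row s
   exactly when the triple (i+1,s),(i,s),(i,s-1) changes orientation because
   of that swap ("lower_swap_flips"), and row m+1 is the first row where this
   fails or the cells are missing (T_op_swap_rows).
   Inversions are counted row by row (inv_num_rows): the triples of row s only
   involve rows s and s-1, so
   - rows below r or above m+1 are untouched (row_inv_local);
   - in a row r < s <= m both rows are swapped; the triples of that row are
     permuted by the transposition i <-> i+1, except that the pair of columns
     (i,i+1) is reversed (row_inv_transposed), and the flip condition makes the
     two orientations of that pair agree;
   - in row r the same count applies, but the pair (i,i+1) contributes the
     orientation of T in sigma and its opposite after the swap, since the two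
     entries differ and the row below agrees;
   - in row m+1 only the lower row is swapped; the stopping condition and an
     exchange identity for orientations (ccw_exchange) balance columns i and
     i+1 against every column to their right (row_inv_lower_transposed).
   Altogether inv(T sigma) + [T ccw] = inv(sigma) + [T cw] (inv_num_swap_block),
   which is the theorem. *)

Lemma big_nat_widen0 m n1 n2 (F : nat -> nat) :
  n1 <= n2 -> (forall k, n1 <= k < n2 -> F k = 0) ->
  \sum_(m <= k < n1) F k = \sum_(m <= k < n2) F k.
Proof.
move=> n12 F0; rewrite (big_nat_widen _ _ _ _ _ n12) big_mkcond /=.
apply: eq_big_nat => k /andP[_ kn2]; case: ltnP => // n1k.
by rewrite F0 // n1k.
Qed.

Lemma sum_nat_pick m n a (F : nat -> nat) :
  m <= a < n -> \sum_(m <= k < n) (k == a) * F k = F a.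
Proof.
move=> Ha; have := big_nat1_eq addn F a m n; rewrite Ha => <-.
rewrite big_mkcond; apply: eq_bigr => k _.
by case: eqP => /= [->|]; rewrite ?mul1n ?mul0n.
Qed.

Lemma sum_nat_balance m n a (F G : nat -> nat) x y :
  m <= a < n -> (forall k, m <= k < n -> k != a -> F k = G k) ->
  F a + x = G a + y -> \sum_(m <= k < n) F k + x = \sum_(m <= k < n) G k + y.
Proof.
move=> Ha FG Fa.
have ain : a \in index_iota m n by rewrite mem_index_iota.
rewrite !(bigD1_seq a ain (iota_uniq _ _)) /=.
have -> : \sum_(k <- index_iota m n | k != a) F k =
          \sum_(k <- index_iota m n | k != a) G k.
  rewrite big_seq_cond [RHS]big_seq_cond; apply: eq_bigr => k /andP[].
  by rewrite mem_index_iota; apply: FG.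
by rewrite addnAC Fa addnAC.
Qed.

Lemma sum_nat_two_points m n a b (F G : nat -> nat) :
  m <= a < n -> m <= b < n -> a != b ->
  (forall k, m <= k < n -> k != a -> k != b -> F k = G k) ->
  F a + F b = G a + G b -> \sum_(m <= k < n) F k = \sum_(m <= k < n) G k.
Proof.
move=> Ha Hb ab FG Fab; pose H k := if k == b then G b else F k.
have FH : \sum_(m <= k < n) F k + G b = \sum_(m <= k < n) H k + F b.
  by apply: sum_nat_balance Hb _ _ => [k _ /negbTE kb|]; rewrite /H ?kb ?eqxx // addnC.
have HG : \sum_(m <= k < n) H k + F b = \sum_(m <= k < n) G k + G b.
  apply: sum_nat_balance Ha _ _ => [k km ka|]; last by rewrite /H (negbTE ab).
  by rewrite /H; case: eqP => [->|/eqP kb] //; apply: FG.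
by apply/eqP; rewrite -(eqn_add2r (G b)) FH HG.
Qed.

Lemma ccw_same (x : nat) (c : option nat) : ccw (Some x) (Some x) c = false.
Proof. by case: c => [z|]; rewrite /ccw /= ltnn ?andbF //=; case: leqP. Qed.

Lemma ccw_swap (x y : nat) (c : option nat) :
  x != y -> ccw (Some x) (Some y) c = ~~ ccw (Some y) (Some x) c.
Proof.
move=> /eqP ne; case: c => [z|]; rewrite /ccw /=;
case: (ltnP x y); case: (ltnP y x); try case: (leqP x z); try case: (leqP y z);
try case: (ltnP z x); try case: (ltnP z y); lia.
Qed.

Lemma ccw_exchange (a b b' : nat) (c c' : option nat) :
  ccw (Some b') (Some b) c = ccw (Some b') (Some b) c' ->
  ccw (Some a) (Some b) c + ccw (Some a) (Some b') c' =
  ccw (Some a) (Some b) c' + ccw (Some a) (Some b') c.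
Proof.
case: c => [c|]; case: c' => [c'|]; rewrite /ccw /=;
case: (ltnP a b); case: (ltnP a b'); case: (ltnP b' b) => //=;
try case: (ltnP b c); try case: (ltnP b c'); try case: (ltnP b' c);
try case: (ltnP b' c'); try case: (ltnP c a); try case: (ltnP c' a) => //=; lia.
Qed.

Definition tswap (i j : nat) : nat :=
  if j == i then i.+1 else if j == i.+1 then i else j.

Lemma tswapK i : involutive (tswap i).
Proof.
move=> j; rewrite /tswap.
case: (j =P i) => [->|ji]; first by rewrite (gtn_eqF (ltnSn i)) !eqxx.
case: (j =P i.+1) => [->|ji1]; first by rewrite !eqxx.
by move/eqP/negbTE: ji => ->; move/eqP/negbTE: ji1 => ->.
Qed.

Lemma tswapL i : tswap i i = i.+1.
Proof. by rewrite /tswap eqxx. Qed.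

Lemma tswapR i : tswap i i.+1 = i.
Proof. by rewrite /tswap (gtn_eqF (ltnSn i)) eqxx. Qed.

Lemma tswap_id i j : j != i -> j != i.+1 -> tswap i j = j.
Proof. by rewrite /tswap => /negbTE -> /negbTE ->. Qed.

Lemma tswap_ltn i u v :
  (tswap i u < tswap i v) + ((u == i) && (v == i.+1))
  = (u < v) + ((u == i.+1) && (v == i)).
Proof.
rewrite /tswap; case: (u =P i) => ui; case: (v =P i) => vi;
case: (u =P i.+1) => ui1; case: (v =P i.+1) => vi1 /=;
by rewrite ?addn0; case: ltnP; case: ltnP; lia.
Qed.

Lemma tswap_range i n j :
  1 <= i -> i.+1 < n -> (1 <= tswap i j < n) = (1 <= j < n).
Proof.
rewrite /tswap => i1 in_; case: (j =P i) => [->|_]; first by rewrite i1 in_ (ltnW in_).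
by case: (j =P i.+1) => [->|_] //; rewrite i1 in_ (ltnW in_).
Qed.

Lemma sum_tswap i n (F : nat -> nat) :
  1 <= i -> i.+1 < n -> \sum_(1 <= j < n) F (tswap i j) = \sum_(1 <= j < n) F j.
Proof.
move=> i1 in_; rewrite -(big_map (tswap i) xpredT F); apply: perm_big.
apply: uniq_perm; first by rewrite (map_inj_uniq (can_inj (tswapK i))) iota_uniq.
  exact: iota_uniq.
move=> j; rewrite -{1}(tswapK i j) (mem_map (can_inj (tswapK i))).
by rewrite !mem_index_iota tswap_range.
Qed.

Definition swap_rows (sigma : filling) (i a b : nat) : filling :=
  fun j s => if a <= s <= b then sigma (tswap i j) s else sigma j s.

Lemma cellv_swap_rows sigma i a b j s :
  cellv (swap_rows sigma i a b) j s =
  if a <= s <= b then cellv sigma (tswap i j) s else cellv sigma j s.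
Proof. by rewrite /cellv /swap_rows; case: (s == 0); case: ifP. Qed.

Lemma swap_cells_swap_rows sigma i a b :
  a <= b.+1 -> swap_cells (swap_rows sigma i a b) i b.+1 =2 swap_rows sigma i a b.+1.
Proof.
move=> ab j s; rewrite /swap_cells /swap_rows /tswap.
case: (s =P b.+1) => [->|sb].
  by rewrite ab leqnn ltnn andbF /=; case: (j == i); case: (j == i.+1).
by have -> : (a <= s <= b.+1) = (a <= s <= b) by apply/idP/idP; lia.
Qed.

(* The triple (i+1,s),(i,s),(i,s-1) changes orientation when only the entries
   of columns i and i+1 in row s-1 are exchanged: the condition under which the
   operator proceeds to row s. *)
Definition lower_swap_flips (sigma : filling) (i s : nat) : bool :=
  ccw_triple sigma i.+1 i s !=
  ccw (cellv sigma i.+1 s) (cellv sigma i s) (cellv sigma i.+1 s.-1).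

Definition swap_block (lam : seq nat) (sigma : filling) (i r m : nat) : Prop :=
  [/\ r <= m,
      forall s, r < s <= m ->
        [&& in_dg lam i.+1 s, in_dg lam i s & lower_swap_flips sigma i s] &
      in_dg lam i.+1 m.+1 -> in_dg lam i m.+1 -> ~~ lower_swap_flips sigma i m.+1].

Lemma T_loop_swap_rows lam sigma i r0 fuel r prev cur :
  1 <= r0 <= r ->
  prev =2 swap_rows sigma i r0 r.-1 -> cur =2 swap_rows sigma i r0 r ->
  colLen lam i.+1 <= fuel + r ->
  exists2 m, swap_block lam sigma i r m &
             T_loop fuel lam i r prev cur =2 swap_rows sigma i r0 m.
Proof.
elim: fuel r prev cur => [|f IH] r prev cur r0r Hprev Hcur Hfuel /=.
  exists r => //; split => // [s|]; first lia.
  by rewrite /in_dg => /andP[_ /andP[_ ?]]; lia.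
have stay : swap_block lam sigma i r r -> exists2 m, swap_block lam sigma i r m &
    cur =2 swap_rows sigma i r0 m by exists r.
have prev_ccw : ccw_triple prev i.+1 i r.+1 = ccw_triple sigma i.+1 i r.+1.
  have out s : r.-1 < s -> (r0 <= s <= r.-1) = false by lia.
  by rewrite /ccw_triple /cellv /= !Hprev /swap_rows !out //; lia.
have cur_ccw : ccw_triple cur i.+1 i r.+1 =
    ccw (cellv sigma i.+1 r.+1) (cellv sigma i r.+1) (cellv sigma i.+1 r).
  have out : (r0 <= r.+1 <= r) = false by lia.
  rewrite /ccw_triple /cellv /= !Hcur /swap_rows tswapL tswapR out.
  by have -> : r0 <= r <= r by lia.
case: ifP => [/andP[dg1 dg0]|dg]; last first.
  by apply: stay; split => // [s|d1 d0]; [lia | move: dg; rewrite d1 d0].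
case: ifP => [same|flip].
  apply: stay; split => // [s|_ _]; first lia.
  by rewrite /lower_swap_flips -prev_ccw -cur_ccw same.
have [|||m [rm climbs stops] Hloop] := IH r.+1 cur (swap_cells cur i r.+1) _ Hcur _ _.
- lia.
- by move=> j s; rewrite /swap_cells !Hcur; apply: swap_cells_swap_rows; lia.
- lia.
exists m => //; split => // [|s /andP[rs sm]]; first lia.
have [<-|] := eqVneq r.+1 s; last by move=> ?; apply: climbs; lia.
by rewrite dg1 dg0 /lower_swap_flips -prev_ccw -cur_ccw flip.
Qed.

Lemma T_op_swap_rows lam sigma i r : 1 <= r ->
  exists2 m, swap_block lam sigma i r m & T_op lam i r sigma =2 swap_rows sigma i r m.
Proof.
move=> r1; apply: T_loop_swap_rows; rewrite ?leq_addr //.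
- by rewrite r1 leqnn.
- by move=> j s; rewrite /swap_rows ifN //; lia.
- move=> j s; rewrite /swap_cells /swap_rows /tswap.
  case: (s =P r) => [->|sr]; last by rewrite ifN //; lia.
  by rewrite leqnn; case: (j == i); case: (j == i.+1).
Qed.

Definition inv_triple (lam : seq nat) (sigma : filling) (s u v : nat) : bool :=
  in_dg lam v s && in_dg lam u s && ccw_triple sigma v u s.

Definition row_inv (lam : seq nat) (sigma : filling) (s : nat) : nat :=
  \sum_(1 <= v < (size lam).+1) \sum_(1 <= u < (size lam).+1)
     (u < v) * inv_triple lam sigma s u v.

Lemma inv_num_rows lam sigma B : (forall v, 1 <= v -> colLen lam v < B) ->
  inv_num lam sigma = \sum_(1 <= s < B) row_inv lam sigma s.
Proof.
move=> HB; rewrite /inv_num /row_inv; set N := (size lam).+1.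
transitivity (\sum_(1 <= v < N) \sum_(1 <= u < N) \sum_(1 <= s < B)
                 (u < v) * inv_triple lam sigma s u v).
  apply: eq_big_nat => v /andP[v1 vN].
  transitivity (\sum_(1 <= u < v) \sum_(1 <= s < B) (u < v) * inv_triple lam sigma s u v).
    apply: eq_big_nat => u /andP[_ uv]; rewrite uv; under [RHS]eq_bigr do rewrite mul1n.
    apply: big_nat_widen0 => [|s /andP[vs _]]; first exact: HB.
    by rewrite /inv_triple /in_dg (leqNgt s) vs !andbF.
  apply: big_nat_widen0 => [|u /andP[vu _]]; first exact: ltnW.
  by rewrite big1 // => s _; rewrite ltnNge vu.
under eq_bigr => v _ do rewrite exchange_big_nat.
by rewrite exchange_big_nat.
Qed.

Lemma row_inv_local lam sigma tau s :
  (forall j, cellv tau j s = cellv sigma j s) ->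
  (forall j, cellv tau j s.-1 = cellv sigma j s.-1) ->
  row_inv lam tau s = row_inv lam sigma s.
Proof.
move=> Es Eb; apply: eq_bigr => v _; apply: eq_bigr => u _.
by rewrite /inv_triple /ccw_triple !Es Eb.
Qed.

Lemma inv_triple_tswap lam sigma tau i s :
  in_dg lam i s = in_dg lam i.+1 s ->
  (forall j, cellv tau j s = cellv sigma (tswap i j) s) ->
  (forall j, cellv tau j s.-1 = cellv sigma (tswap i j) s.-1) ->
  forall u v, inv_triple lam tau s u v = inv_triple lam sigma s (tswap i u) (tswap i v).
Proof.
move=> Hd Es Eb.
have dg_tswap j : in_dg lam (tswap i j) s = in_dg lam j s.
  rewrite /tswap; case: (j =P i) => [->|_]; first by rewrite Hd.
  by case: (j =P i.+1) => [->|].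
by move=> u v; rewrite /inv_triple /ccw_triple !dg_tswap !Es Eb.
Qed.

Lemma row_inv_transposed lam sigma tau i s :
  1 <= i -> i.+1 <= size lam -> in_dg lam i s = in_dg lam i.+1 s ->
  (forall j, cellv tau j s = cellv sigma (tswap i j) s) ->
  (forall j, cellv tau j s.-1 = cellv sigma (tswap i j) s.-1) ->
  row_inv lam tau s + inv_triple lam sigma s i i.+1 =
  row_inv lam sigma s + inv_triple lam sigma s i.+1 i.
Proof.
move=> i1 iN Hd Es Eb; set N := (size lam).+1; set H := inv_triple lam sigma s.
have iN' : i.+1 < N by [].
have pick a b : 1 <= a < N -> 1 <= b < N ->
    \sum_(1 <= v < N) \sum_(1 <= u < N) ((u == a) && (v == b)) * H u v = H a b.
  move=> Ha Hb; transitivity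
      (\sum_(1 <= v < N) (v == b) * \sum_(1 <= u < N) (u == a) * H u v).
    apply: eq_bigr => v _; rewrite big_distrr; apply: eq_bigr => u _ /=.
    by case: (u == a); case: (v == b); rewrite ?mul0n ?mul1n.
  by rewrite (sum_nat_pick _ Hb) (sum_nat_pick _ Ha).
have reindex : row_inv lam tau s =
    \sum_(1 <= v < N) \sum_(1 <= u < N) (tswap i u < tswap i v) * H u v.
  rewrite -(@sum_tswap i N
              (fun v => \sum_(1 <= u < N) (tswap i u < tswap i v) * H u v) i1 iN').
  apply: eq_bigr => v _; rewrite -(@sum_tswap i N
              (fun u => (tswap i u < tswap i (tswap i v)) * H u (tswap i v)) i1 iN').
  by apply: eq_bigr => u _; rewrite !tswapK (inv_triple_tswap Hd Es Eb).
have Hi : 1 <= i < N by rewrite i1 ltnW.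
have Hi1 : 1 <= i.+1 < N by [].
rewrite reindex /row_inv -(pick _ _ Hi Hi1) -(pick _ _ Hi1 Hi) -!big_split.
apply: eq_bigr => v _; rewrite -!big_split; apply: eq_bigr => u _ /=.
by rewrite -!mulnDl tswap_ltn.
Qed.

Lemma colLen_mono lam u v :
  is_partition lam -> 1 <= u <= v -> colLen lam v <= colLen lam u.
Proof.
move=> /andP[sorted_lam _] /andP[u1 uv]; rewrite /colLen.
have [vN|] := ltnP v.-1 (size lam); last by move=> ?; rewrite nth_default.
have geq_trans : transitive geq by move=> y x z xy yz; exact: leq_trans yz xy.
by apply: (sorted_leq_nth geq_trans leqnn 0 sorted_lam); rewrite ?inE; lia.
Qed.

Lemma in_dg_left lam u v s :
  is_partition lam -> 1 <= u <= v -> in_dg lam v s -> in_dg lam u s.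
Proof.
move=> Hp uv; have := colLen_mono Hp uv.
rewrite /in_dg => ? /andP[/andP[_ vN] /andP[s1 sv]].
by apply/andP; split; apply/andP; split; lia.
Qed.

Lemma ccw_triple_swap_columns sigma i s :
  1 <= s -> sigma i s != sigma i.+1 s ->
  cellv sigma i s.-1 = cellv sigma i.+1 s.-1 ->
  ccw_triple sigma i i.+1 s = ~~ ccw_triple sigma i.+1 i s.
Proof.
move=> s1 ne below; rewrite /ccw_triple below.
have cellS j : cellv sigma j s = Some (sigma j s).
  by rewrite /cellv; case: s s1 {ne below}.
by rewrite !cellS ccw_swap.
Qed.

Lemma ccw_triple_flip sigma i s :
  1 <= s -> lower_swap_flips sigma i s ->
  ccw_triple sigma i i.+1 s = ccw_triple sigma i.+1 i s.
Proof.
move=> s1; rewrite /lower_swap_flips /ccw_triple.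
have cellS j : cellv sigma j s = Some (sigma j s) by rewrite /cellv; case: s s1.
rewrite !cellS; have [->|ne] := eqVneq (sigma i s) (sigma i.+1 s).
  by rewrite !ccw_same.
by rewrite (ccw_swap _ ne); case: ccw; case: ccw.
Qed.

(* A row s whose lower row alone is transposed keeps its number of inversions
   when s does not flip: only the columns i, i+1 are affected, and for each
   column v to their right the exchange identity applies. *)
Lemma row_inv_lower_transposed lam sigma tau i s :
  is_partition lam -> 1 <= i -> i.+1 <= size lam -> 1 <= s ->
  (forall j, cellv tau j s = cellv sigma j s) ->
  (forall j, cellv tau j s.-1 = cellv sigma (tswap i j) s.-1) ->
  (in_dg lam i.+1 s -> in_dg lam i s -> ~~ lower_swap_flips sigma i s) ->
  row_inv lam tau s = row_inv lam sigma s.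
Proof.
move=> Hp i1 iN s1 Es Eb stop; apply: eq_big_nat => v /andP[v1 vN].
apply: (@sum_nat_two_points _ _ i i.+1); [by rewrite i1 ltnW | by [] | lia | |].
  by move=> u _ ui ui1; rewrite /inv_triple /ccw_triple !Es Eb tswap_id.
rewrite /inv_triple /ccw_triple !Es !Eb tswapL tswapR.
have [v_le|v_gt|->] := ltngtP v i.+1.
- by [].
- rewrite !mul1n.
  case Dv : (in_dg lam v s) => //=.
  have D1 : in_dg lam i.+1 s by apply: in_dg_left Dv; lia.
  have D0 : in_dg lam i s by apply: in_dg_left D1; lia.
  move/negPn/eqP: (stop D1 D0); rewrite D1 D0 /ccw_triple /=.
  have cellS j : cellv sigma j s = Some (sigma j s).
    by rewrite /cellv; case: s s1 {Es Eb stop Dv D1 D0}.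
  by rewrite !cellS => same; symmetry; apply: ccw_exchange.
- rewrite !mul1n !mul0n !addn0.
  case: (boolP (in_dg lam i.+1 s)) => //= D1; case: (boolP (in_dg lam i s)) => //= D0.
  by move/negPn/eqP: (stop D1 D0); rewrite /ccw_triple => ->.
Qed.

Lemma inv_num_ext lam (sigma tau : filling) :
  sigma =2 tau -> inv_num lam sigma = inv_num lam tau.
Proof.
move=> E; apply: eq_bigr => v _; apply: eq_bigr => u _; apply: eq_bigr => s _.
by rewrite /ccw_triple /cellv !E.
Qed.

Section SwapBlock.

Variables (lam : seq nat) (sigma : filling) (i r m : nat).
Hypotheses (Hpart : is_partition lam) (i_pos : 1 <= i) (i_lt : i.+1 <= size lam)
  (r_pos : 1 <= r) (block : swap_block lam sigma i r m).

Let tau := swap_rows sigma i r m.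

Lemma row_inv_swap_block s : s != r -> row_inv lam tau s = row_inv lam sigma s.
Proof.
move=> sr; case: block => rm climbs stops.
have outside : s < r \/ m.+1 < s -> row_inv lam tau s = row_inv lam sigma s.
  by move=> Hs; apply: row_inv_local => j; rewrite cellv_swap_rows ifN //; lia.
have [|s_le] := ltnP m.+1 s; first by move=> Hs; apply: outside; right.
have [|r_le] := ltnP s r; first by move=> Hs; apply: outside; left.
have [m_lt|s_le_m] := ltnP m s.
  have -> : s = m.+1 by lia.
  apply: (row_inv_lower_transposed Hpart i_pos i_lt) => // [j|j].
    by rewrite cellv_swap_rows ifN //; lia.
  by rewrite cellv_swap_rows ifT //; lia.
have /and3P[d1 d0 flip] :
    [&& in_dg lam i.+1 s, in_dg lam i s & lower_swap_flips sigma i s].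
  by apply: climbs; lia.
have Es j : cellv tau j s = cellv sigma (tswap i j) s.
  by rewrite cellv_swap_rows ifT //; lia.
have Eb j : cellv tau j s.-1 = cellv sigma (tswap i j) s.-1.
  by rewrite cellv_swap_rows ifT //; lia.
have Hd : in_dg lam i s = in_dg lam i.+1 s by rewrite d0 d1.
have := row_inv_transposed i_pos i_lt Hd Es Eb.
by rewrite /inv_triple d0 d1 /= (ccw_triple_flip _ flip) => [/addIn|]; last lia.
Qed.

Lemma row_inv_swap_block_bottom :
  in_dg lam i r -> in_dg lam i.+1 r -> sigma i r != sigma i.+1 r ->
  cellv sigma i r.-1 = cellv sigma i.+1 r.-1 ->
  row_inv lam tau r + ccw_triple sigma i.+1 i r =
  row_inv lam sigma r + ~~ ccw_triple sigma i.+1 i r.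
Proof.
move=> d0 d1 ne below; case: block => rm _ _.
have Es j : cellv tau j r = cellv sigma (tswap i j) r.
  by rewrite cellv_swap_rows ifT //; lia.
have Eb j : cellv tau j r.-1 = cellv sigma (tswap i j) r.-1.
  rewrite cellv_swap_rows ifN; last lia.
  by rewrite /tswap; case: (j =P i) => [->|_] //; case: (j =P i.+1) => [->|_].
have Hd : in_dg lam i r = in_dg lam i.+1 r by rewrite d0 d1.
have := row_inv_transposed i_pos i_lt Hd Es Eb.
by rewrite /inv_triple d0 d1 /= ccw_triple_swap_columns.
Qed.

Lemma inv_num_swap_block :
  in_dg lam i r -> in_dg lam i.+1 r -> sigma i r != sigma i.+1 r ->
  cellv sigma i r.-1 = cellv sigma i.+1 r.-1 ->
  inv_num lam tau + ccw_triple sigma i.+1 i r =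
  inv_num lam sigma + ~~ ccw_triple sigma i.+1 i r.
Proof.
move=> d0 d1 ne below.
have HB v : 1 <= v -> colLen lam v < (colLen lam 1).+1.
  by move=> v1; rewrite ltnS colLen_mono // v1.
rewrite !(inv_num_rows _ HB); apply: (@sum_nat_balance _ _ r).
- have := colLen_mono Hpart (i_pos : 1 <= 1 <= i).
  by case/andP: d0 => _ /andP[r1 ri] ?; lia.
- by move=> s _; apply: row_inv_swap_block.
- exact: row_inv_swap_block_bottom.
Qed.

End SwapBlock.

Local Open Scope ring_scope.

Theorem mainTheorem3 (lam : seq nat) (sigma : filling) (i r : nat) :
  is_partition lam ->
  is_filling lam sigma ->
  in_dg lam i r -> in_dg lam i.+1 r ->
  sigma i r <> sigma i.+1 r ->
  (forall s, (1 <= s <= r.-1)%N -> sigma i s = sigma i.+1 s) ->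
  (inv_num lam (T_op lam i r sigma) : int) =
    if ccw_triple sigma i.+1 i r then (inv_num lam sigma : int) - 1
    else (inv_num lam sigma : int) + 1.
Proof.
move=> Hpart _ d0 d1 ne below.
have /andP[/andP[i_pos _] /andP[r_pos _]] := d0.
have i_lt : (i.+1 <= size lam)%N by case/andP: d1 => /andP[].
have below_r : cellv sigma i r.-1 = cellv sigma i.+1 r.-1.
  by rewrite /cellv; case: eqP => // r1; rewrite below //; lia.
have [m block T_opE] := T_op_swap_rows lam sigma i r_pos.
rewrite (inv_num_ext _ T_opE).
have := inv_num_swap_block Hpart i_pos i_lt r_pos block d0 d1 (introN eqP ne) below_r.
by case: ccw_triple => /=; lia.
Qed.
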